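(* Let $A\in\mathbb{R}^{n\times n}$ be an invertible M-matrix, partitioned as $A=\begin{bmatrix} A_{11} & A_{12}\\ A_{21} & A_{22}\end{bmatrix}$ with $A_{11}\in\mathbb{R}^{k\times k}$ and $A_{22}\in\mathbb{R}^{(n-k)\times(n-k)}$. Let $M_{11},N_{11}\in\mathbb{R}^{k\times k}$ and $M_{22},N_{22}\in\mathbb{R}^{(n-k)\times(n-k)}$, and suppose that both pairs \[ M = \begin{bmatrix} M_{11} & 0\\ A_{21} & M_{22}\end{bmatrix},\quad N = \begin{bmatrix} N_{11} & -A_{12}\\ 0 & N_{22}\end{bmatrix} \qquad\text{and}\qquad \hat{M} = \begin{bmatrix} M_{11} & A_{12}\\ 0 & M_{22}\end{bmatrix},\quad \hat{N} = \begin{bmatrix} N_{11} & 0\\ -A_{21} & N_{22}\end{bmatrix} \] are regular splittings of $A$. Then $\hat{M}^{-1}\hat{N}$ and $M^{-1}N$ have the same eigenvalues, and hence the same spectral radius.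
   Context: A regular splitting of $A$ is a pair $(M,N)$ with $M$ an invertible M-matrix, $N\geq 0$ entrywise, and $A=M-N$. The spectral radius $\rho(P)$ is the maximum modulus of the eigenvalues of $P$. *)

From HB Require Import structures.
From mathcomp Require Import all_boot all_order all_algebra.
From mathcomp Require Import complex.
Set Implicit Arguments. Unset Strict Implicit. Unset Printing Implicit Defensive.
Import Order.TTheory GRing.Theory Num.Theory.
Local Open Scope ring_scope.
Local Open Scope complex_scope.

(* Matrices are real in the sense of an arbitrary real closed field R;
   eigenvalues are taken in the algebraic closure R[i] = complex R. *)

Definition ceig (R : rcfType) (n : nat) (P : 'M[R]_n) (z : R[i]) : Prop :=
  eigenvalue (map_mx (fun x : R => x%:C) P) z.

Definition is_spectral_radius (R : rcfType) (n : nat) (P : 'M[R]_n) (r : R) : Prop :=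
  (exists2 z, ceig P z & `|z| = r%:C) /\ (forall z, ceig P z -> `|z| <= r%:C).

Definition nonneg_mx (R : rcfType) (m n : nat) (B : 'M[R]_(m, n)) : Prop :=
  forall i j, 0 <= B i j.

Definition inv_Mmatrix (R : rcfType) (n : nat) (A : 'M[R]_n) : Prop :=
  exists s : R, exists B : 'M[R]_n,
    [/\ 0 < s, nonneg_mx B, A = s%:M - B &
        forall z, ceig B z -> `|z| < s%:C].

Definition regular_splitting (R : rcfType) (n : nat) (A M N : 'M[R]_n) : Prop :=
  [/\ inv_Mmatrix M, nonneg_mx N & A = M - N].

(* Both iteration matrices are of the form M^-1 N, so z is an eigenvalue of
   either exactly when the pencil N - z M is singular.  The two pencils are
   [[a, -A12], [-z A21, d]] and [[a, -z A12], [-A21, d]] with the same diagonal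
   blocks a = N11 - z M11 and d = N22 - z M22; for z != 0 they are conjugate
   by diag(z I, I), and for z = 0 both are block triangular.  Hence the pencils
   have the same determinant and the spectra coincide.  Invertibility of M and
   of the hatted M is all that is used from the regular splittings. *)

From HB Require Import structures.
From mathcomp Require Import all_boot all_order all_algebra.
From mathcomp Require Import complex.
Set Implicit Arguments. Unset Strict Implicit. Unset Printing Implicit Defensive.
Import Order.TTheory GRing.Theory Num.Theory.
Local Open Scope ring_scope.

Section Pencils.

Variable F : fieldType.

Lemma eigenvalue_det n (g : 'M[F]_n) a :
  eigenvalue g a = (\det (g - a%:M) == 0).
Proof.
by rewrite /eigenvalue /eigenspace kermx_eq0 row_free_unit unitmxE unitfE negbK.
Qed.

Lemma eigenvalue_mulVmx n (M N : 'M[F]_n) z : M \in unitmx ->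
  eigenvalue (invmx M *m N) z = (\det (N - z *: M) == 0).
Proof.
move=> uM; rewrite eigenvalue_det.
have -> : invmx M *m N - z%:M = invmx M *m (N - z *: M).
  by rewrite mulmxBr -scalemxAr mulVmx // scalemx1.
have /negbTE detVM_neq0 : \det (invmx M) != 0.
  by rewrite -unitfE -unitmxE unitmx_inv.
by rewrite det_mulmx mulf_eq0 detVM_neq0.
Qed.

Lemma det_block_mx_scale_offdiag k l (a : 'M[F]_k) (b : 'M[F]_(k, l))
    (c : 'M[F]_(l, k)) (d : 'M[F]_l) z :
  \det (block_mx a (z *: b) c d) = \det (block_mx a b (z *: c) d).
Proof.
have [->|z_neq0] := eqVneq z 0; first by rewrite !scale0r det_ublock det_lblock.
pose D : 'M[F]_(k + l) := block_mx z%:M 0 0 1%:M.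
have detD_neq0 : \det D != 0.
  by rewrite det_ublock det1 mulr1 det_scalar expf_neq0.
have conjD : D *m block_mx a b (z *: c) d = block_mx a (z *: b) c d *m D.
  rewrite !mulmx_block !mulmx0 !mul0mx !addr0 !add0r !mulmx1 !mul1mx.
  by rewrite !mul_scalar_mx !mul_mx_scalar.
by apply: (mulIf detD_neq0); rewrite -det_mulmx -conjD det_mulmx mulrC.
Qed.

Lemma det_pencil_block_swap k l (M11 N11 : 'M[F]_k) (A12 : 'M[F]_(k, l))
    (A21 : 'M[F]_(l, k)) (M22 N22 : 'M[F]_l) z :
  \det (block_mx N11 (- A12) 0 N22 - z *: block_mx M11 0 A21 M22) =
  \det (block_mx N11 0 (- A21) N22 - z *: block_mx M11 A12 0 M22).
Proof.
rewrite !scale_block_mx !opp_block_mx !add_block_mx !scaler0 !oppr0 !addr0 !add0r.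
by rewrite -!scalerN det_block_mx_scale_offdiag.
Qed.

End Pencils.

Local Open Scope complex_scope.

Section ComplexEigenvalues.

Variables (R : rcfType) (n : nat).

Local Notation "A ^c" := (map_mx (real_complex R) A).

Lemma ceig_real (B : 'M[R]_n) s : eigenvalue B s -> ceig B s%:C.
Proof. by rewrite /ceig -(eigenvalue_map (real_complex R)). Qed.

Lemma inv_Mmatrix_unit (A : 'M[R]_n) : inv_Mmatrix A -> A \in unitmx.
Proof.
case=> s [B [s_gt0 _ -> rhoB_lt_s]]; apply: contraT => singular.
have /rhoB_lt_s : ceig B s%:C.
  apply: ceig_real; rewrite eigenvalue_det -opprB -scaleN1r detZ.
  by move: singular; rewrite unitmxE unitfE negbK => /eqP ->; rewrite mulr0.
by rewrite ger0_norm ?lecR ?ltW // ltxx.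
Qed.

Lemma ceig_mulVmx (M N : 'M[R]_n) z : M \in unitmx ->
  ceig (invmx M *m N) z <-> \det (N^c - z *: M^c) = 0.
Proof.
move=> uM; rewrite /ceig map_mxM map_invmx eigenvalue_mulVmx ?map_unitmx //.
by split => /eqP.
Qed.

Lemma is_spectral_radius_eq (P Q : 'M[R]_n) r :
  (forall z, ceig P z <-> ceig Q z) ->
  is_spectral_radius P r <-> is_spectral_radius Q r.
Proof.
have transfer (P' Q' : 'M[R]_n) : (forall z, ceig P' z -> ceig Q' z) ->
    (forall z, ceig Q' z -> ceig P' z) ->
    is_spectral_radius P' r -> is_spectral_radius Q' r.
  move=> PQ QP [[z Pz zr] bound]; split=> [|z' /QP /bound //].
  by exists z; first exact: PQ.
move=> PQ; split; apply: transfer => z; by case: (PQ z).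
Qed.

End ComplexEigenvalues.

Theorem lemma2 (R : rcfType) (k l : nat)
  (A11 M11 N11 : 'M[R]_k) (A12 : 'M[R]_(k, l)) (A21 : 'M[R]_(l, k))
  (A22 M22 N22 : 'M[R]_l) :
  inv_Mmatrix (block_mx A11 A12 A21 A22) ->
  regular_splitting (block_mx A11 A12 A21 A22)
    (block_mx M11 0 A21 M22) (block_mx N11 (- A12) 0 N22) ->
  regular_splitting (block_mx A11 A12 A21 A22)
    (block_mx M11 A12 0 M22) (block_mx N11 0 (- A21) N22) ->
  let P := invmx (block_mx M11 0 A21 M22) *m block_mx N11 (- A12) 0 N22 in
  let Ph := invmx (block_mx M11 A12 0 M22) *m block_mx N11 0 (- A21) N22 in
  (forall z, ceig Ph z <-> ceig P z) /\
  (forall r, is_spectral_radius Ph r <-> is_spectral_radius P r).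
Proof.
move=> _ [/inv_Mmatrix_unit uM _ _] [/inv_Mmatrix_unit uMh _ _] P Ph.
have same_eig z : ceig Ph z <-> ceig P z.
  rewrite (ceig_mulVmx _ _ uM) (ceig_mulVmx _ _ uMh) !map_block_mx !map_mxN !map_mx0.
  by rewrite det_pencil_block_swap.
by split=> [//|r]; apply: is_spectral_radius_eq.
Qed.
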